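(* Let $\mathcal{X}$ be a non-empty set and $\mathcal{B}\subseteq\mathcal{P}(\mathcal{X})\setminus\{\emptyset\}$ such that $\mathcal{B}^*:=\mathcal{B}\cup\{\emptyset\}$ is a sigma field. Then for any $g\in\mathcal{G}_{\geq0}(\mathcal{X})$, $g$ is $\mathcal{B}^*$-measurable in the usual measure-theoretic sense if and only if $g$ is $\mathcal{B}$-measurable in the sense defined below.
   Context: $\mathcal{G}_{\geq0}(\mathcal{X})$ is the set of bounded non-negative real functions on $\mathcal{X}$; $\mathbb{I}_B$ is the indicator of $B$. A function $g\in\mathcal{G}_{\geq0}(\mathcal{X})$ is simple $\mathcal{B}$-measurable if there are $c_0\geq0$, $n\in\mathbb{N}\cup\{0\}$ and, for $k=1,\dots,n$, $c_k\geq0$ and $B_k\in\mathcal{B}$ with $g=c_0+\sum_{k=1}^nc_k\mathbb{I}_{B_k}$. A function $g\in\mathcal{G}_{\geq0}(\mathcal{X})$ is $\mathcal{B}$-measurable if there is a sequence $(g_n)_{n\in\mathbb{N}}$ of simple $\mathcal{B}$-measurable functions in $\mathcal{G}_{\geq0}(\mathcal{X})$ with $\lim_{n\to\infty}\sup_{x}|g(x)-g_n(x)|=0$. *)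

From HB Require Import structures.
From mathcomp Require Import all_boot all_order all_algebra.
From mathcomp Require Import all_classical all_reals all_analysis.
Set Implicit Arguments. Unset Strict Implicit. Unset Printing Implicit Defensive.
Import Order.TTheory GRing.Theory Num.Theory.
Local Open Scope classical_set_scope.
Local Open Scope ring_scope.
Import numFieldNormedType.Exports.

Definition bnd_nonneg {R : realType} {X : Type} (g : X -> R) : Prop :=
  (forall x, 0 <= g x) /\ exists M : R, forall x, `|g x| <= M.

Definition Bstar {X : Type} (B : set (set X)) : set (set X) := B `|` [set set0].

Definition simple_Bmeas {R : realType} {X : Type} (B : set (set X)) (g : X -> R) : Prop :=
  bnd_nonneg g /\
  exists (c0 : R) (n : nat) (c : 'I_n -> R) (Bk : 'I_n -> set X),
    0 <= c0 /\ (forall k, 0 <= c k) /\ (forall k, B (Bk k)) /\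
    g = (fun x => c0 + \sum_(k < n) c k * \1_(Bk k) x).

Definition Bmeas {R : realType} {X : Type} (B : set (set X)) (g : X -> R) : Prop :=
  bnd_nonneg g /\
  exists gn : nat -> X -> R, (forall n, simple_Bmeas B (gn n)) /\
    (fun n => sup (range (fun x => `|g x - gn n x|))) @ \oo --> 0.

Definition usual_meas {R : realType} {X : Type} (F : set (set X)) (g : X -> R) : Prop :=
  forall A : set R, measurable A -> F (g @^-1` A).

(* For a simple B-measurable g, every B_k lies in the sigma field B^*, so g is
   B^*-measurable; a uniform limit is in particular a pointwise limit, and
   pointwise limits of measurable real functions are measurable.
   Conversely, if g is B^*-measurable with 0 <= g < K, the staircase
   functions sum_{k < nK} 1/n * 1_{g >= (k+1)/n} are within 1/n of g
   everywhere, and each level set {g >= (k+1)/n} is in B^*.  An empty level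
   set is not in B, but it can be traded for X, which is in B as the
   complement of the empty set, with coefficient 0. *)

From HB Require Import structures.
From mathcomp Require Import all_boot all_order all_algebra.
From mathcomp Require Import all_classical all_reals all_analysis.
From mathcomp Require Import measurable_realfun.
Import Order.TTheory GRing.Theory Num.Theory numFieldNormedType.Exports.
Set Implicit Arguments.
Unset Strict Implicit.
Unset Printing Implicit Defensive.

Local Open Scope classical_set_scope.
Local Open Scope ring_scope.

(* Measurable types must be pointed; a point of X is all this copy adds. *)
Definition pointed_at {X : Type} (x0 : X) : Type := X.

HB.instance Definition _ (X : Type) (x0 : X) := gen_eqMixin (pointed_at x0).
HB.instance Definition _ (X : Type) (x0 : X) := gen_choiceMixin (pointed_at x0).
HB.instance Definition _ (X : Type) (x0 : X) := isPointed.Build (pointed_at x0) x0.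

Section usual_measurability.
Variables (R : realType) (X : Type) (x0 : X) (F : set (set X)).
Hypothesis sF : sigma_algebra setT F.

Local Notation T := (g_sigma_algebraType (F : set (set (pointed_at x0)))).

Lemma usual_measP (f : X -> R) : usual_meas F f <-> measurable_fun [set: T] f.
Proof.
split=> [fF _ A mA|mf A mA]; rewrite ?setTI.
  by apply: sub_sigma_algebra; exact: fF.
by have := mf measurableT A mA; rewrite setTI /measurable /= sigma_algebra_id.
Qed.

Lemma usual_meas_indic_sum n (c0 : R) (c : 'I_n -> R) (A : 'I_n -> set X) :
  (forall k, F (A k)) ->
  usual_meas F (fun x => c0 + \sum_(k < n) c k * \1_(A k) x).
Proof.
move=> FA; apply/usual_measP/measurable_funD; first exact: measurable_cst.
apply: measurable_sum => k; apply/measurable_funM; first exact: measurable_cst.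
by apply: measurable_indic; apply: sub_sigma_algebra.
Qed.

Lemma usual_meas_cvg (h : (X -> R)^nat) (g : X -> R) :
  (forall n, usual_meas F (h n)) -> (forall x, h ^~ x @ \oo --> g x) ->
  usual_meas F g.
Proof.
move=> Fh hg; apply/usual_measP.
by apply: (measurable_fun_cvg (fun n => proj1 (usual_measP _) (Fh n))) => x _.
Qed.

End usual_measurability.

Section sup_distance.
Variables (R : realType) (X : Type).

Definition sup_dist (f g : X -> R) : R := sup (range (fun x => `|f x - g x|)).

Lemma bnd_nonneg_dist_ubound (f g : X -> R) :
  bnd_nonneg f -> bnd_nonneg g -> has_ubound (range (fun x => `|f x - g x|)).
Proof.
move=> [_ [Mf fM]] [_ [Mg gM]]; exists (Mf + Mg) => _ [x _ <-].
by rewrite (le_trans (ler_normB _ _)) ?lerD.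
Qed.

Lemma le_sup_dist (f g : X -> R) x :
  has_ubound (range (fun x => `|f x - g x|)) -> `|f x - g x| <= sup_dist f g.
Proof. by move=> ub; apply: ub_le_sup => //; exists x. Qed.

Lemma sup_dist_cvg_pointwise (g : X -> R) (h : (X -> R)^nat) :
  (forall n, has_ubound (range (fun x => `|g x - h n x|))) ->
  sup_dist g (h n) @[n --> \oo] --> 0 -> forall x, h ^~ x @ \oo --> g x.
Proof.
move=> ub hg x; apply/cvgrPdist_le => e e0.
move/cvgrPdist_le: hg => /(_ e e0); apply: filterS => n.
rewrite sub0r normrN => /(le_trans (ler_norm _)); exact/le_trans/le_sup_dist.
Qed.

Lemma sup_dist_cvg0 (x0 : X) (g : X -> R) (h : (X -> R)^nat) (e : R^nat) :
  (forall n x, `|g x - h n x| <= e n) -> e @ \oo --> 0 ->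
  sup_dist g (h n) @[n --> \oo] --> 0.
Proof.
move=> he e0; apply: (squeeze_cvgr _ (cvg_cst 0) e0); apply: nearW => n.
have ub : ubound (range (fun x => `|g x - h n x|)) (e n) by move=> _ [x _ <-].
rewrite (le_trans (normr_ge0 (g x0 - h n x0))) ?le_sup_dist //=; last by exists (e n).
by apply: ge_sup => //; exists `|g x0 - h n x0|, x0.
Qed.

End sup_distance.

Lemma indic_itvcy (R : realType) (a y : R) :
  \1_(`[a, +oo[ : set R) y = (a <= y)%R%:R :> R.
Proof. by rewrite indicE set_itvcy mem_setE. Qed.

Section staircase.
Variables (R : realType) (m : R).
Hypothesis m_gt0 : 0 < m.

Definition staircase (N : nat) (y : R) : R :=
  \sum_(k < N) m^-1 * \1_(`[k.+1%:R / m, +oo[ : set R) y.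

Lemma staircase_full N y : N%:R / m <= y -> staircase N y = N%:R / m.
Proof.
move=> Ny; rewrite /staircase (eq_bigr (fun=> m^-1)) => [|k _].
  by rewrite sumr_const card_ord mulr_natl.
rewrite indic_itvcy (le_trans _ Ny) ?mulr1 // ler_pM2r ?invr_gt0 // ler_nat.
exact: ltn_ord.
Qed.

Lemma staircase_bounds N y : 0 <= y -> y < N%:R / m ->
  y - m^-1 < staircase N y <= y.
Proof.
move=> y0; elim: N => [|N IH]; first by rewrite mul0r => /(le_lt_trans y0); rewrite ltxx.
move=> yN; rewrite /staircase big_ord_recr /= indic_itvcy.
rewrite lt_geF // mulr0 addr0 -/(staircase N y).
have [Ny|/IH //] := leP (N%:R / m) y.
rewrite staircase_full // Ny andbT ltrBlDr.
by rewrite -natr1 mulrDl mul1r in yN.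
Qed.

End staircase.

Section B_measurability.
Variables (R : realType) (X : Type) (B : set (set X)).

Lemma Bstar_setT (x0 : X) : sigma_algebra setT (Bstar B) -> B setT.
Proof.
case=> B0 BC _; have := BC _ B0; rewrite setD0 => -[//|/= T0].
by have : [set: X] x0 by []; rewrite T0.
Qed.

Lemma simple_Bmeas_indic_sum n (c : 'I_n -> R) (A : 'I_n -> set X) :
  B setT -> (forall k, 0 <= c k) -> (forall k, Bstar B (A k)) ->
  simple_Bmeas B (fun x => \sum_(k < n) c k * \1_(A k) x).
Proof.
move=> BT c0 BA.
have ind_ge0 k x : 0 <= \1_(A k) x :> R by rewrite indicE; case: (_ \in _).
have ind_le1 k x : \1_(A k) x <= 1 :> R by rewrite indicE; case: (_ \in _).
have sum_ge0 x : 0 <= \sum_(k < n) c k * \1_(A k) x.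
  by apply: sumr_ge0 => k _; rewrite mulr_ge0.
split.
  split=> //; exists (\sum_(k < n) c k) => x; rewrite ger0_norm //.
  by apply: ler_sum => k _; rewrite ler_piMr.
exists 0, n, (fun k => if pselect (A k = set0) then 0 else c k),
  (fun k => if pselect (A k = set0) then setT else A k).
split=> //; split=> [k|]; first by case: ifP.
split=> [k|]; first by case: pselect => [//|Ak0]; case: (BA k).
apply/funext => x; rewrite add0r; apply: eq_bigr => k _.
by case: pselect => //= Ak0; rewrite Ak0 indic0 mulr0 mul0r.
Qed.

Lemma Bmeas_usual_meas (x0 : X) (g : X -> R) :
  sigma_algebra setT (Bstar B) -> Bmeas B g -> usual_meas (Bstar B) g.
Proof.
move=> sB [gb [h [hs hg]]]; apply: (usual_meas_cvg x0 sB (h := h)).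
  move=> n; have [_ [c0 [k [c [A [_ [_ [BA ->]]]]]]]] := hs n.
  by apply: (usual_meas_indic_sum x0 sB) => i; left.
apply: sup_dist_cvg_pointwise hg => n.
exact: bnd_nonneg_dist_ubound gb (hs n).1.
Qed.

Lemma usual_meas_Bmeas (x0 : X) (g : X -> R) : B setT ->
  bnd_nonneg g -> usual_meas (Bstar B) g -> Bmeas B g.
Proof.
move=> BT gb Bg; have [g0 [M gM]] := gb.
have [K MK] : exists K : nat, M < K%:R by exists (Num.Def.trunc M).+1; exact: truncnS_gt.
pose h n x := staircase n.+1%:R (n.+1 * K) (g x).
have h_approx n x : `|g x - h n x| <= harmonic n.
  have gK : g x < (n.+1 * K)%:R / n.+1%:R.
    rewrite natrM mulrAC divff ?mul1r ?pnatr_eq0 //.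
    exact: le_lt_trans (le_trans (ler_norm _) (gM x)) MK.
  have /andP[lo hi] := staircase_bounds (ltr0Sn _ n) (g0 x) gK.
  by rewrite /h /= ger0_norm ?subr_ge0 // lerBlDl -lerBlDr ltW.
split=> //; exists h; split=> [n|]; last first.
  exact: (sup_dist_cvg0 x0 h_approx cvg_harmonic).
apply: (simple_Bmeas_indic_sum (c := fun=> n.+1%:R^-1)
  (A := fun k => g @^-1` `[k.+1%:R / n.+1%:R, +oo[)) => // k.
exact: Bg (measurable_itv _).
Qed.

End B_measurability.

Theorem proposition3 (R : realType) (X : Type) (B : set (set X)) :
  (exists x : X, True) ->
  ~ B set0 ->
  sigma_algebra setT (Bstar B) ->
  forall g : X -> R, bnd_nonneg g ->
    (usual_meas (Bstar B) g <-> Bmeas B g).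
Proof.
move=> [x0 _] _ sB g gb; split=> gB.
  exact: (usual_meas_Bmeas x0 (Bstar_setT x0 sB) gb gB).
exact: (Bmeas_usual_meas x0 sB gB).
Qed.
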